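(* In the setting of the context (with $d_i^\pm>0$ for all $i$), let $s=\min_{i\in[k]}n_i/n$. Then $$\lambda_{\max}(C^+)\le\tau^-+\frac{n\eta}{n(s(1-2\eta)+\eta)-(1-\eta)},\qquad\lambda_{\min}(C^-)\ge\tau^+,$$ and consequently $$\|(C^-)^{-1/2}C^+(C^-)^{-1/2}\|\le\frac{\lambda_{\max}(C^+)}{\lambda_{\min}(C^-)}\le\frac{\tau^-+\frac{n\eta}{n(s(1-2\eta)+\eta)-(1-\eta)}}{\tau^+}.$$
   Context: SSBM with $n$ nodes, $k\ge2$ clusters $C_1,\dots,C_k$ of sizes $n_1,\dots,n_k$, edge probability $p\in(0,1]$ and sign-flip probability $\eta\in[0,1/2)$ (edges present independently w.p. $p$, signed $+1$ within and $-1$ across clusters, signs flipped independently w.p. $\eta$). Parameters $\tau^+>0$, $\tau^-\ge0$. Expected positive/negative degrees of a node in $C_i$: $d_i^+=p(n_i(1-2\eta)+n\eta-(1-\eta))$, $d_i^-=p(n(1-\eta)-n_i(1-2\eta)-\eta)$. $u^\pm=(\sqrt{n_i/d_i^\pm})_{i\in[k]}$. $C^+=-p\eta u^+(u^+)^\top+\mathrm{diag}_i\big(1+\tau^-+\frac p{d_i^+}(1-\eta-n_i(1-2\eta))\big)$, $C^-=-p(1-\eta)u^-(u^-)^\top+\mathrm{diag}_i\big(1+\tau^++\frac p{d_i^-}(\eta+n_i(1-2\eta))\big)$. *)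

From HB Require Import structures.
From mathcomp Require Import all_boot all_order all_algebra.
From mathcomp Require Import polyrcf.
From mathcomp Require Import classical_sets reals.
Set Implicit Arguments. Unset Strict Implicit. Unset Printing Implicit Defensive.
Import Order.TTheory GRing.Theory Num.Theory.
Local Open Scope ring_scope.

Section SSBM.
Variable R : realType.

(* Expected positive / negative degrees of a node in cluster C_i
   (nn = n, ni = n_i). *)
Definition dplus (p eta : R) (nn ni : nat) : R :=
  p * (ni%:R * (1 - 2 * eta) + nn%:R * eta - (1 - eta)).
Definition dminus (p eta : R) (nn ni : nat) : R :=
  p * (nn%:R * (1 - eta) - ni%:R * (1 - 2 * eta) - eta).

Definition Cplus (k : nat) (nn : nat) (ns : 'I_k -> nat) (p eta taum : R)
  : 'M[R]_k :=
  \matrix_(i, j)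
    (- p * eta * Num.sqrt ((ns i)%:R / dplus p eta nn (ns i))
              * Num.sqrt ((ns j)%:R / dplus p eta nn (ns j))
     + (i == j)%:R * (1 + taum + p / dplus p eta nn (ns i)
                                   * (1 - eta - (ns i)%:R * (1 - 2 * eta)))).

Definition Cminus (k : nat) (nn : nat) (ns : 'I_k -> nat) (p eta taup : R)
  : 'M[R]_k :=
  \matrix_(i, j)
    (- p * (1 - eta) * Num.sqrt ((ns i)%:R / dminus p eta nn (ns i))
                     * Num.sqrt ((ns j)%:R / dminus p eta nn (ns j))
     + (i == j)%:R * (1 + taup + p / dminus p eta nn (ns i)
                                   * (eta + (ns i)%:R * (1 - 2 * eta)))).

(* Largest / smallest eigenvalue: largest / smallest real root of the
   characteristic polynomial (rootsR returns the sorted list of real roots). *)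
Definition lambda_max (k : nat) (A : 'M[R]_k) : R :=
  last 0 (rootsR (char_poly A)).
Definition lambda_min (k : nat) (A : 'M[R]_k) : R :=
  head 0 (rootsR (char_poly A)).

Definition vnorm (k : nat) (x : 'cV[R]_k) : R :=
  Num.sqrt (\sum_i x i 0 ^+ 2).
Definition opnorm (k : nat) (A : 'M[R]_k) : R :=
  reals.sup [set r : R | exists x : 'cV[R]_k, vnorm x = 1 /\ r = vnorm (A *m x)]%classic.

Definition is_inv_sqrt (k : nat) (C S : 'M[R]_k) : Prop :=
  S^T = S /\ (forall x : 'cV[R]_k, x != 0 -> 0 < (x^T *m S *m x) 0 0)
  /\ S *m S = invmx C.

End SSBM.

(* Both C^+ and C^- have the shape D - c u u^T with c >= 0, u_i = sqrt(n_i / d_i)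
   and, once the diagonal is simplified using the formulas for d_i^+/-,
   D_i = tau + c n / d_i (c = p eta and tau = tau^- for C^+, c = p (1 - eta) and
   tau = tau^+ for C^-).  Since sum_i u_i^2 d_i = n, Cauchy-Schwarz gives
   c (u . x)^2 <= sum_i (c n / d_i) x_i^2, hence
   tau |x|^2 <= x^T C x <= (max_i D_i) |x|^2.
   The vector (u_i d_i)_i is an eigenvector of C^- for tau^+, so
   lambda_min(C^-) = tau^+; and max_i D_i <= B for C^+ because d_i^+ / p is at
   least n (s (1 - 2 eta) + eta) - (1 - eta), with equality at a smallest cluster.
   Finally S^2 = (C^-)^-1 and C^- >= tau^+ give |S y|^2 <= |y|^2 / tau^+, while
   the Rayleigh bound x^T C^+ x <= lambda_max(C^+) |x|^2 (spectral theorem) and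
   the semidefiniteness of C^+ give |C^+ z| <= lambda_max(C^+) |z|; composing,
   |S C^+ S x| <= lambda_max(C^+) / tau^+ |x|. *)

From HB Require Import structures.
From mathcomp Require Import all_boot all_order all_algebra.
From mathcomp Require Import polyrcf reals.
From mathcomp Require Import complex spectral sesquilinear ring lra.
Import Order.TTheory GRing.Theory Num.Theory.
Local Open Scope ring_scope.

Set Implicit Arguments.
Unset Strict Implicit.
Unset Printing Implicit Defensive.

Section QuadraticForms.
Variables (R : realFieldType) (k : nat).
Implicit Types (A S : 'M[R]_k) (u w x : 'cV[R]_k).

Definition bilform A u w : R := (u^T *m A *m w) 0 0.
Definition sqnorm u : R := bilform 1%:M u u.

Lemma bilformC A u w : A^T = A -> bilform A w u = bilform A u w.
Proof.
have entry_tr (M : 'M[R]_1) : M 0 0 = M^T 0 0 by rewrite mxE.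
by move=> AT; rewrite /bilform [LHS]entry_tr !trmx_mul trmxK AT mulmxA.
Qed.

Lemma bilform1 u w : bilform 1%:M u w = \sum_i u i 0 * w i 0.
Proof. by rewrite /bilform mulmx1 mxE; apply: eq_bigr => i _; rewrite mxE. Qed.

Lemma sqnormE u : sqnorm u = \sum_i u i 0 ^+ 2.
Proof. by rewrite /sqnorm bilform1; under eq_bigr do rewrite -expr2. Qed.

Lemma sqnorm_ge0 u : 0 <= sqnorm u.
Proof. by rewrite sqnormE; apply: sumr_ge0 => i _; exact: sqr_ge0. Qed.

Lemma sqnorm_gt0 u : u != 0 -> 0 < sqnorm u.
Proof.
move=> u0; rewrite lt_def sqnorm_ge0 andbT; apply: contra u0.
rewrite sqnormE psumr_eq0 => [/allP u2_0|i _]; last exact: sqr_ge0.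
apply/eqP/matrixP => i j; rewrite (ord1 j) mxE.
by have := u2_0 i (mem_index_enum i); rewrite sqrf_eq0 => /eqP.
Qed.

Lemma bilform_addZ A u w t : A^T = A ->
  bilform A (u + t *: w) (u + t *: w) =
    bilform A u u + 2 * t * bilform A u w + t ^+ 2 * bilform A w w.
Proof.
move=> AT; have := bilformC u w AT; rewrite /bilform.
have -> : (u + t *: w)^T = u^T + t *: w^T by rewrite linearD linearZ.
rewrite !(mulmxDl, mulmxDr) -!scalemxAl -!scalemxAr !mxE => ->.
ring.
Qed.

Lemma discriminant_le (a b c : R) : 0 <= c ->
  (forall t, 0 <= a + 2 * t * b + t ^+ 2 * c) -> b ^+ 2 <= a * c.
Proof.
rewrite le_eqVlt => /orP[/eqP c0 | c_gt0] quad_ge0.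
  rewrite -c0 mulr0; have [-> | b0] := eqVneq b 0; first by rewrite expr0n.
  have := quad_ge0 (- (a + 1) / (2 * b)); rewrite -c0 mulr0 addr0.
  by rewrite [_ * b](_ : _ = - (a + 1)); [lra | field].
have := quad_ge0 (- b / c).
rewrite [X in 0 <= X](_ : _ = (a * c - b ^+ 2) / c); last by field; rewrite gt_eqF.
by rewrite pmulr_lge0 ?invr_gt0 // subr_ge0.
Qed.

Lemma bilform_cauchy_schwarz A u w : A^T = A -> (forall z, 0 <= bilform A z z) ->
  bilform A u w ^+ 2 <= bilform A u u * bilform A w w.
Proof.
move=> AT psd; apply: discriminant_le => [|t]; first exact: psd.
by rewrite -bilform_addZ.
Qed.

Lemma sum_cauchy_schwarz (a b : 'I_k -> R) :
  (\sum_i a i * b i) ^+ 2 <= (\sum_i a i ^+ 2) * (\sum_i b i ^+ 2).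
Proof.
have := @bilform_cauchy_schwarz 1%:M (\col_i a i) (\col_i b i) (trmx1 _ _).
rewrite -!/(sqnorm _) !sqnormE bilform1.
under eq_bigr do rewrite !mxE.
under [X in _ <= X * _]eq_bigr do rewrite !mxE.
under [X in _ <= _ * X]eq_bigr do rewrite !mxE.
by apply=> z; rewrite -/(sqnorm z) sqnorm_ge0.
Qed.

Lemma le_of_sqr_le_mul (t a : R) : 0 <= a -> 0 <= t -> t ^+ 2 <= a * t -> t <= a.
Proof.
by move=> a_ge0; rewrite le_eqVlt => /orP[/eqP <- // | t_gt0]; rewrite expr2 ler_pM2r.
Qed.

Lemma root_char_poly_bilform A r : root (char_poly A) r ->
  exists2 x, 0 < sqnorm x & bilform A x x = r * sqnorm x.
Proof.
rewrite -eigenvalue_root_char => /eigenvalueP [v vA v0].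
exists v^T; first by rewrite sqnorm_gt0 // trmx_eq0.
by rewrite /sqnorm /bilform trmxK vA mulmx1 -scalemxAl mxE.
Qed.

Lemma unitmx_of_bilform_ge A a : 0 < a -> (forall x, a * sqnorm x <= bilform A x x) ->
  A \in unitmx.
Proof.
move=> a_gt0 A_ge; rewrite unitmxE unitfE; apply/negP => /eqP detA0.
have : root (char_poly A) 0 by rewrite /root horner_coef0 char_poly_det detA0 mulr0.
move=> /root_char_poly_bilform [x x_gt0]; rewrite mul0r => formA0.
by have := A_ge x; rewrite formA0 pmulr_rle0 // leNgt x_gt0.
Qed.

Lemma sqnorm_mulmx_le A L x : A^T = A -> (forall z, 0 <= bilform A z z) ->
  (forall z, bilform A z z <= L * sqnorm z) -> sqnorm (A *m x) <= L ^+ 2 * sqnorm x.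
Proof.
move=> AT A_ge0 A_le; set w := A *m x.
have w_form : sqnorm w = bilform A x w.
  by rewrite /sqnorm /bilform /w trmx_mul AT !mulmx1 mulmxA.
apply: le_of_sqr_le_mul; [exact: mulr_ge0 (sqr_ge0 L) (sqnorm_ge0 x) | exact: sqnorm_ge0 |].
rewrite [in X in X ^+ 2]w_form; apply: le_trans (bilform_cauchy_schwarz x w AT A_ge0) _.
apply: le_trans (ler_pM (A_ge0 _) (A_ge0 _) (A_le x) (A_le w)) _.
by rewrite le_eqVlt; apply/orP; left; apply/eqP; ring.
Qed.

Lemma sqnorm_inv_sqrt_le A S a u : A^T = A -> 0 < a ->
  (forall x, a * sqnorm x <= bilform A x x) -> S^T = S -> S *m S = invmx A ->
  sqnorm (S *m u) <= sqnorm u / a.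
Proof.
move=> AT a_gt0 A_ge ST SS; have A_unit := unitmx_of_bilform_ge a_gt0 A_ge.
set y := invmx A *m u; set t := sqnorm (S *m u).
have t_uy : t = bilform 1%:M u y.
  by rewrite /t /sqnorm /bilform /y -SS trmx_mul ST !mulmx1 !mulmxA.
have t_Ay : t = bilform A y y.
  by rewrite t_uy /bilform mulmx1 /y -{1}(mulKVmx A_unit u) trmx_mul AT !mulmxA.
have cs : t ^+ 2 <= sqnorm u * sqnorm y.
  by rewrite t_uy; apply: bilform_cauchy_schwarz (trmx1 _ _) _ => z; exact: sqnorm_ge0.
have Ay : a * sqnorm y <= t by rewrite t_Ay; exact: A_ge.
apply: le_of_sqr_le_mul; rewrite ?divr_ge0 ?sqnorm_ge0 ?(ltW a_gt0) //.
rewrite mulrAC ler_pdivlMr //; apply: le_trans (ler_wpM2r (ltW a_gt0) cs) _.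
by rewrite -mulrA ler_wpM2l ?sqnorm_ge0 // mulrC.
Qed.

Lemma sqnorm_conj_inv_sqrt_le A C S a L : C^T = C -> 0 < a ->
  (forall z, a * sqnorm z <= bilform C z z) -> S^T = S -> S *m S = invmx C ->
  A^T = A -> (forall z, 0 <= bilform A z z) ->
  (forall z, bilform A z z <= L * sqnorm z) ->
  forall x, sqnorm (S *m A *m S *m x) <= (L / a) ^+ 2 * sqnorm x.
Proof.
move=> CT a_gt0 C_ge ST SS AT A_ge0 A_le x.
have S_le u := sqnorm_inv_sqrt_le u CT a_gt0 C_ge ST SS.
have inva_ge0 : 0 <= a^-1 by rewrite invr_ge0 ltW.
rewrite -!mulmxA; apply: le_trans (S_le _) _.
apply: le_trans (ler_wpM2r inva_ge0 (sqnorm_mulmx_le _ AT A_ge0 A_le)) _.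
have -> : (L / a) ^+ 2 * sqnorm x = L ^+ 2 * (sqnorm x / a) / a by ring.
by rewrite ler_wpM2r // ler_wpM2l ?sqr_ge0.
Qed.

End QuadraticForms.

Section ExtremeRoots.
Variable R : rcfType.
Implicit Types (q : {poly R}) (x : R).

Lemma mem_rootsR q x : q != 0 -> (x \in rootsR q) = root q x.
Proof. by move=> q0; rewrite -(roots_on_rootsR q0) in_itv. Qed.

Lemma root_le_last_rootsR q x : q != 0 -> root q x -> x <= last 0 (rootsR q).
Proof.
move=> q0; rewrite -mem_rootsR // => xs; set s := rootsR q.
have s_gt0 : (0 < size s)%N by rewrite (leq_ltn_trans (leq0n (index x s))) ?index_mem.
rewrite -nth_last -(nth_index 0 xs).
rewrite (lt_sorted_leq_nth 0 (sorted_roots _ _ _)) ?inE ?index_mem //.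
  by rewrite -ltnS prednK // index_mem.
by rewrite prednK.
Qed.

Lemma head_rootsR_le_root q x : q != 0 -> root q x -> head 0 (rootsR q) <= x.
Proof.
move=> q0; rewrite -mem_rootsR // => xs; set s := rootsR q.
have s_gt0 : (0 < size s)%N by rewrite (leq_ltn_trans (leq0n (index x s))) ?index_mem.
rewrite -nth0 -(nth_index 0 xs).
by rewrite (lt_sorted_leq_nth 0 (sorted_roots _ _ _)) ?inE ?index_mem.
Qed.

End ExtremeRoots.

Section Rayleigh.
Local Open Scope sesquilinear_scope.

Lemma spectral_diag_eigenvalue (C : numClosedFieldType) n (A : 'M[C]_n) j :
  A \is normalmx -> eigenvalue A (spectral_diag A 0 j).
Proof.
move=> /orthomx_spectralP; set P := spectralmx A; set d := spectral_diag A => AE.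
have P_unit : P \in unitmx := spectral_unit A.
apply/eigenvalueP; exists (row j P).
  by rewrite -row_mul {1}AE !mulmxA mulmxV // mul1mx row_mul row_diag_mx -scalemxAl -rowE.
rewrite rowE; apply/eqP => /(congr1 (mulmx^~ (invmx P))).
by rewrite mulmxK // mul0mx => /matrixP/(_ 0 j)/eqP; rewrite !mxE !eqxx oner_eq0.
Qed.

Lemma normalmx_sesqform_le (C : numClosedFieldType) n (A : 'M[C]_n) (L : C)
    (v : 'cV[C]_n) :
  A \is normalmx -> (forall j, spectral_diag A 0 j <= L) ->
  (v^t* *m A *m v) 0 0 <= L * (v^t* *m v) 0 0.
Proof.
move=> /orthomx_spectralP.
set P := spectralmx A; set d := spectral_diag A => AE d_le.
have P_unitary : P \is unitarymx := spectral_unitarymx A.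
set y := P *m v.
have yE : v^t* *m P^t* = y^t* by rewrite /y trmx_mul map_mxM.
have -> : v^t* *m A *m v = y^t* *m diag_mx d *m y.
  by rewrite {1}AE invmx_unitary // -yE /y !mulmxA.
have -> : v^t* *m v = y^t* *m y.
  rewrite -yE /y mulmxA -[v^t* *m _ *m _]mulmxA -invmx_unitary //.
  by rewrite mulVmx ?mulmx1 ?spectral_unit.
rewrite mul_mx_diag !mxE mulr_sumr; apply: ler_sum => j _; rewrite !mxE.
by rewrite mulrAC [L * _]mulrC; apply: ler_wpM2l (d_le j); rewrite mulrC mul_conjC_ge0.
Qed.

Lemma bilform_le_last_rootsR (R : rcfType) k (A : 'M[R]_k) x : A^T = A ->
  bilform A x x <= last 0 (rootsR (char_poly A)) * sqnorm x.
Proof.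
(* Apply the complex spectral theorem to the Hermitian complexification of A. *)
move=> AT; set L := last 0 _; pose f := real_complex R; pose AC := map_mx f A.
have f_real r : f r \is Num.real by apply/complex_realP; exists r.
have AC_herm : AC \is hermsymmx.
  apply: realsym_hermsym; last by apply/mxOverP => i j; rewrite mxE.
  by apply/is_hermitianmxP; rewrite expr0 scale1r map_mx_id // map_trmx AT.
have d_le j : spectral_diag AC 0 j <= f L.
  have /mxOverP/(_ 0 j)/complex_realP [a da] := hermitian_spectral_diag_real AC_herm.
  rewrite da lecR; apply: root_le_last_rootsR (monic_neq0 (char_poly_monic A)) _.
  have := spectral_diag_eigenvalue j (hermitian_normalmx AC_herm).
  by rewrite da eigenvalue_root_char -map_char_poly fmorph_root.
have xf : (map_mx f x)^t* = map_mx f x^T.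
  by rewrite map_trmx -map_mx_comp; apply: eq_map_mx => r /=; rewrite conj_Creal.
have := normalmx_sesqform_le (map_mx f x) (hermitian_normalmx AC_herm) d_le.
by rewrite xf -!map_mxM !mxE -rmorphM lecR /sqnorm /bilform mulmx1 !mxE.
Qed.

End Rayleigh.

Section ExtremeEigenvalues.
Variables (R : realType) (k : nat).
Implicit Types (A : 'M[R]_k) (x : 'cV[R]_k).

(* [lambda_max A] is the default value 0 when [char_poly A] has no real root. *)
Lemma lambda_max_eq0_or_root A :
  lambda_max A = 0 \/ root (char_poly A) (lambda_max A).
Proof.
have := mem_last 0 (rootsR (char_poly A)); rewrite inE => /orP[/eqP <-|]; first by left.
by rewrite mem_rootsR ?monic_neq0 ?char_poly_monic //; right.
Qed.

Lemma lambda_max_le A b : 0 <= b -> (forall x, bilform A x x <= b * sqnorm x) ->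
  lambda_max A <= b.
Proof.
move=> b_ge0 A_le.
have [-> // | /root_char_poly_bilform [x x_gt0 Ax]] := lambda_max_eq0_or_root A.
by have := A_le x; rewrite Ax ler_pM2r.
Qed.

Lemma lambda_max_ge0 A : (forall x, 0 <= bilform A x x) -> 0 <= lambda_max A.
Proof.
move=> A_ge0.
have [-> // | /root_char_poly_bilform [x x_gt0 Ax]] := lambda_max_eq0_or_root A.
by have := A_ge0 x; rewrite Ax pmulr_lge0.
Qed.

Lemma lambda_min_eq A a : root (char_poly A) a ->
  (forall x, a * sqnorm x <= bilform A x x) -> lambda_min A = a.
Proof.
move=> Aa A_ge; have A0 := monic_neq0 (char_poly_monic A).
apply/eqP; rewrite eq_le head_rootsR_le_root //=.
have : a \in rootsR (char_poly A) by rewrite mem_rootsR.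
rewrite /lambda_min; case E: rootsR => [// | r s] _ /=.
have /root_char_poly_bilform [x x_gt0 Ax] : root (char_poly A) r.
  by rewrite -mem_rootsR // E mem_head.
by have := A_ge x; rewrite Ax ler_pM2r.
Qed.

Lemma opnorm_le A c : (0 < k)%N -> 0 <= c ->
  (forall x, sqnorm (A *m x) <= c ^+ 2 * sqnorm x) -> opnorm A <= c.
Proof.
move=> k_gt0 c_ge0 A_le.
have vnormE x : vnorm x = Num.sqrt (sqnorm x) by rewrite sqnormE.
apply: ge_sup.
  pose e : 'cV[R]_k := delta_mx (Ordinal k_gt0) 0.
  exists (vnorm (A *m e)), e; split => //.
  by rewrite vnormE /sqnorm /bilform mulmx1 trmx_delta mul_delta_mx mxE !eqxx sqrtr1.
move=> _ [x [x1 ->]]; rewrite vnormE -(ger0_norm c_ge0) -sqrtr_sqr ler_wsqrtr //.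
by have := A_le x; rewrite -[sqnorm x](sqr_sqrtr (sqnorm_ge0 _)) -vnormE x1 expr1n mulr1.
Qed.

End ExtremeEigenvalues.

Section SSBMMatrix.
Variables (R : rcfType) (k : nat) (c tau : R) (m d : 'I_k -> R).
Local Notation N := (\sum_l m l).

Definition ssbm_vec i : R := Num.sqrt (m i / d i).

Definition ssbm_mx : 'M[R]_k := \matrix_(i, j)
  (- c * ssbm_vec i * ssbm_vec j + (i == j)%:R * (tau + c * N / d i)).

Lemma ssbm_mx_sym : ssbm_mx^T = ssbm_mx.
Proof.
apply/matrixP => i j; rewrite !mxE eq_sym.
by have [-> | _] := eqVneq j i; [| rewrite !mul0r !addr0 mulrAC].
Qed.

Lemma bilform_ssbm_mx x : bilform ssbm_mx x x =
  - c * (\sum_i ssbm_vec i * x i 0) ^+ 2 + \sum_i (tau + c * N / d i) * x i 0 ^+ 2.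
Proof.
rewrite /bilform !mxE.
transitivity (\sum_j \sum_i (- c * (ssbm_vec i * x i 0) * (ssbm_vec j * x j 0)
                + (i == j)%:R * ((tau + c * N / d i) * x i 0 * x j 0))).
  apply: eq_bigr => j _; rewrite !mxE big_distrl /=; apply: eq_bigr => i _.
  by rewrite !mxE; ring.
under eq_bigr do rewrite big_split; rewrite big_split /=; congr (_ + _).
  rewrite expr2 big_distrr /= mulr_sumr; apply: eq_bigr => j _.
  by rewrite big_distrl /= mulr_sumr; apply: eq_bigr => i _; ring.
apply: eq_bigr => j _; rewrite (bigD1 j) //= eqxx mul1r [X in _ + X]big1.
  by rewrite addr0 -mulrA -expr2.
by move=> i /negPf ->; rewrite mul0r.
Qed.

Hypotheses (c_ge0 : 0 <= c) (m_ge0 : forall i, 0 <= m i) (d_gt0 : forall i, 0 < d i).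

Lemma ssbm_vec_sqr i : ssbm_vec i ^+ 2 * d i = m i.
Proof.
by rewrite sqr_sqrtr ?divfK ?gt_eqF //; exact: divr_ge0 (m_ge0 i) (ltW (d_gt0 i)).
Qed.

Lemma ssbm_vec_sum_sqr_le (x : 'cV[R]_k) :
  (\sum_i ssbm_vec i * x i 0) ^+ 2 <= N * \sum_i x i 0 ^+ 2 / d i.
Proof.
have sqrt_d_sqr i : Num.sqrt (d i) ^+ 2 = d i by rewrite sqr_sqrtr // ltW.
have sqrt_d_neq0 i : Num.sqrt (d i) != 0 by rewrite gt_eqF // sqrtr_gt0.
have := sum_cauchy_schwarz (fun i => ssbm_vec i * Num.sqrt (d i))
                           (fun i => x i 0 / Num.sqrt (d i)).
under eq_bigr do rewrite mulrACA divff // mulr1.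
under [X in _ <= X * _]eq_bigr do rewrite exprMn sqrt_d_sqr ssbm_vec_sqr.
by under [X in _ <= _ * X]eq_bigr do rewrite expr_div_n sqrt_d_sqr.
Qed.

Lemma bilform_ssbm_mx_tau x : bilform ssbm_mx x x = - c * (\sum_i ssbm_vec i * x i 0) ^+ 2
  + tau * sqnorm x + c * (N * \sum_i x i 0 ^+ 2 / d i).
Proof.
rewrite bilform_ssbm_mx sqnormE -addrA; congr (_ + _); move: N => n.
by rewrite !mulr_sumr -big_split; apply: eq_bigr => i _ /=; ring.
Qed.

Lemma ssbm_bilform_ge x : tau * sqnorm x <= bilform ssbm_mx x x.
Proof.
have := ler_wpM2l c_ge0 (ssbm_vec_sum_sqr_le x).
rewrite bilform_ssbm_mx_tau; lra.
Qed.

Lemma ssbm_bilform_le b x : (forall i, tau + c * N / d i <= b) ->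
  bilform ssbm_mx x x <= b * sqnorm x.
Proof.
move=> diag_le; rewrite bilform_ssbm_mx sqnormE [b * _]mulr_sumr.
rewrite -[X in _ <= X]add0r lerD //; first by rewrite mulNr oppr_le0 mulr_ge0 ?sqr_ge0.
by apply: ler_sum => i _; rewrite ler_wpM2r ?sqr_ge0.
Qed.

Lemma ssbm_mx_eigenvector :
  (\row_i (ssbm_vec i * d i)) *m ssbm_mx = tau *: \row_i (ssbm_vec i * d i).
Proof.
apply/rowP => j; rewrite !mxE.
under eq_bigr do rewrite !mxE mulrDr.
rewrite big_split /= [X in _ + X](bigD1 j) //= eqxx mul1r.
rewrite [X in _ + (_ + X)]big1 => [|i /negPf ->]; last by rewrite mul0r mulr0.
transitivity (- c * ssbm_vec j * N + ssbm_vec j * d j * (tau + c * N / d j)).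
  rewrite addr0; congr (_ + _); rewrite mulr_sumr; apply: eq_bigr => i _.
  by rewrite -ssbm_vec_sqr; ring.
by field; rewrite gt_eqF.
Qed.

Lemma root_char_poly_ssbm_mx : 0 < N -> root (char_poly ssbm_mx) tau.
Proof.
move=> N_gt0; rewrite -eigenvalue_root_char; apply/eigenvalueP.
exists (\row_i (ssbm_vec i * d i)); first exact: ssbm_mx_eigenvector.
apply: contraTneq N_gt0 => /rowP v0; rewrite -leNgt le_eqVlt; apply/orP; left.
under eq_bigr do rewrite -ssbm_vec_sqr expr2 -mulrA.
by apply/eqP/big1 => i _; have := v0 i; rewrite !mxE => ->; rewrite mulr0.
Qed.

End SSBMMatrix.

Section SSBMModel.
Variables (R : realType) (k nn : nat) (ns : 'I_k -> nat) (p eta taup taum : R).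
Local Notation dp i := (dplus p eta nn (ns i)).
Local Notation dm i := (dminus p eta nn (ns i)).
Hypotheses (k_gt0 : (0 < k)%N) (ns_sum : (\sum_i ns i)%N = nn).
Hypotheses (p_gt0 : 0 < p) (eta_ge0 : 0 <= eta) (eta_lt_half : eta < 1 / 2).
Hypotheses (dp_gt0 : forall i, 0 < dp i) (dm_gt0 : forall i, 0 < dm i).

Lemma nodes_gt0 : (0 < nn)%N.
Proof.
have eta_lt1 : eta < 1 by move: eta_lt_half; lra.
rewrite lt0n; apply/eqP => nn0; pose i0 := Ordinal k_gt0; have := dp_gt0 i0.
have -> : ns i0 = 0%N by apply/eqP; rewrite -leqn0 -nn0 -ns_sum (bigD1 i0) //= leq_addr.
by rewrite /dplus nn0 !mul0r add0r sub0r pmulr_rgt0 // oppr_gt0 subr_lt0 ltNge ltW.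
Qed.

Lemma Cplus_ssbm :
  Cplus nn ns p eta taum =
    ssbm_mx (p * eta) taum (fun i => (ns i)%:R) (fun i => dp i).
Proof.
apply/matrixP => i j; rewrite !mxE /ssbm_vec -natr_sum ns_sum.
congr (_ + _ * _); first by ring.
move: (lt0r_neq0 (dp_gt0 i)); rewrite /dplus mulf_eq0 negb_or => /andP[p0 X0].
by field; rewrite X0 p0.
Qed.

Lemma Cminus_ssbm :
  Cminus nn ns p eta taup =
    ssbm_mx (p * (1 - eta)) taup (fun i => (ns i)%:R) (fun i => dm i).
Proof.
apply/matrixP => i j; rewrite !mxE /ssbm_vec -natr_sum ns_sum.
congr (_ + _ * _); first by ring.
move: (lt0r_neq0 (dm_gt0 i)); rewrite /dminus mulf_eq0 negb_or => /andP[p0 X0].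
by field; rewrite X0 p0.
Qed.

Local Notation Cp := (Cplus nn ns p eta taum).
Local Notation Cm := (Cminus nn ns p eta taup).

Lemma Cplus_sym : Cp^T = Cp.
Proof. by rewrite Cplus_ssbm ssbm_mx_sym. Qed.

Lemma Cminus_sym : Cm^T = Cm.
Proof. by rewrite Cminus_ssbm ssbm_mx_sym. Qed.

Lemma Cplus_bilform_ge x : taum * sqnorm x <= bilform Cp x x.
Proof.
rewrite Cplus_ssbm; apply: ssbm_bilform_ge => [|i|i]; rewrite ?ler0n //.
by rewrite mulr_ge0 // ltW.
Qed.

Lemma Cminus_bilform_ge x : taup * sqnorm x <= bilform Cm x x.
Proof.
rewrite Cminus_ssbm; apply: ssbm_bilform_ge => [|i|i]; rewrite ?ler0n //.
by rewrite mulr_ge0 ?ltW //; move: eta_lt_half; lra.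
Qed.

Lemma lambda_min_Cminus : lambda_min Cm = taup.
Proof.
apply: lambda_min_eq; last exact: Cminus_bilform_ge.
rewrite Cminus_ssbm root_char_poly_ssbm_mx // -natr_sum ns_sum ltr0n; exact: nodes_gt0.
Qed.

Variable s : R.
Hypothesis s_min : s = \big[Num.min/1]_i ((ns i)%:R / nn%:R).
(* [dmin] is min_i d_i^+ / p, the denominator of the bound B. *)
Local Notation dmin := (nn%:R * (s * (1 - 2 * eta) + eta) - (1 - eta)).

Lemma dplus_div i : dp i / p = (ns i)%:R * (1 - 2 * eta) + nn%:R * eta - (1 - eta).
Proof. by rewrite /dplus mulrC mulKf ?gt_eqF. Qed.

Lemma dmin_le i : dmin <= dp i / p.
Proof.
have nn_gt0 : 0 < nn%:R :> R by rewrite ltr0n nodes_gt0.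
have : s <= (ns i)%:R / nn%:R by rewrite s_min; exact: bigmin_le.
rewrite dplus_div ler_pdivlMr // => s_le.
rewrite mulrDr lerD2r lerD2r mulrA [nn%:R * s]mulrC ler_wpM2r //.
by move: eta_lt_half; lra.
Qed.

Lemma dmin_gt0 : 0 < dmin.
Proof.
have nn_gt0 : 0 < nn%:R :> R by rewrite ltr0n nodes_gt0.
have ratio_le1 i : xpredT i -> (ns i)%:R / nn%:R <= 1 :> R.
  by rewrite ler_pdivrMr // mul1r ler_nat -ns_sum (bigD1 i) //= leq_addr.
have [j _ s_j] := eq_bigmin (Ordinal k_gt0) xpredT _ isT ratio_le1; rewrite -s_min in s_j.
have -> : dmin = dp j / p by rewrite dplus_div s_j; field; rewrite gt_eqF.
exact: divr_gt0.
Qed.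

Local Notation bound := (taum + nn%:R * eta / dmin).

Lemma Cplus_diag_le i : taum + p * eta * (\sum_l (ns l)%:R) / dp i <= bound.
Proof.
rewrite -natr_sum ns_sum lerD2l.
have -> : p * eta * nn%:R / dp i = nn%:R * eta / (dp i / p) by field; rewrite !gt_eqF.
rewrite ler_wpM2l ?mulr_ge0 // lef_pV2 ?dmin_le // posrE ?dmin_gt0 //.
exact: divr_gt0.
Qed.

Lemma Cplus_bilform_le x : bilform Cp x x <= bound * sqnorm x.
Proof.
rewrite Cplus_ssbm; apply: ssbm_bilform_le; first by rewrite mulr_ge0 // ltW.
exact: Cplus_diag_le.
Qed.

Hypothesis taum_ge0 : 0 <= taum.

Lemma lambda_max_Cplus_le : lambda_max Cp <= bound.
Proof.
apply: lambda_max_le Cplus_bilform_le; apply: le_trans (Cplus_diag_le (Ordinal k_gt0)).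
by rewrite -natr_sum addr_ge0 // (divr_ge0 _ (ltW (dp_gt0 _))) // !mulr_ge0 // ltW.
Qed.

Lemma Cplus_bilform_ge0 x : 0 <= bilform Cp x x.
Proof. exact: le_trans (mulr_ge0 taum_ge0 (sqnorm_ge0 x)) (Cplus_bilform_ge x). Qed.

Lemma lambda_max_Cplus_ge0 : 0 <= lambda_max Cp.
Proof. exact: lambda_max_ge0 Cplus_bilform_ge0. Qed.

End SSBMModel.

Theorem mainTheorem10 (R : realType) (k nn : nat) (ns : 'I_k -> nat)
  (p eta taup taum : R) :
  (2 <= k)%N ->
  (\sum_i ns i)%N = nn ->
  0 < p -> p <= 1 ->
  0 <= eta -> eta < 1 / 2 ->
  0 < taup -> 0 <= taum ->
  (forall i, 0 < dplus p eta nn (ns i)) ->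
  (forall i, 0 < dminus p eta nn (ns i)) ->
  forall s : R, s = \big[Num.min/1]_i ((ns i)%:R / nn%:R) ->
  let B := taum + nn%:R * eta / (nn%:R * (s * (1 - 2 * eta) + eta) - (1 - eta)) in
  let Cp := Cplus nn ns p eta taum in
  let Cm := Cminus nn ns p eta taup in
  [/\ lambda_max Cp <= B,
      taup <= lambda_min Cm
    & forall S : 'M[R]_k, is_inv_sqrt Cm S ->
        opnorm (S *m Cp *m S) <= lambda_max Cp / lambda_min Cm
        /\ lambda_max Cp / lambda_min Cm <= B / taup].
Proof.
move=> k_ge2 ns_sum p_gt0 _ eta_ge0 eta_lt taup_gt0 taum_ge0 dp_gt0 dm_gt0 s s_min.
move=> B Cp Cm.
have k_gt0 : (0 < k)%N by apply: leq_trans k_ge2.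
have Lmax_le : lambda_max Cp <= B by apply: lambda_max_Cplus_le.
have Lmax_ge0 : 0 <= lambda_max Cp by apply: lambda_max_Cplus_ge0.
have -> : lambda_min Cm = taup by apply: lambda_min_Cminus.
have Cp_sym : Cp^T = Cp by apply: Cplus_sym.
have Cm_sym : Cm^T = Cm by apply: Cminus_sym.
split => // S [ST [_ SS]]; split; last by rewrite ler_wpM2r // invr_ge0 ltW.
apply: opnorm_le k_gt0 (divr_ge0 Lmax_ge0 (ltW taup_gt0)) _ => x.
apply: (sqnorm_conj_inv_sqrt_le Cm_sym taup_gt0 _ ST SS Cp_sym) => z.
- exact: Cminus_bilform_ge.
- exact: Cplus_bilform_ge0.
- exact: bilform_le_last_rootsR.
Qed.
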